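(* For every integer $l\ge 7$ there is no monotone search $\tilde c$-strategy (for any color assignment $\tilde c$) that cleans the tree $T_l$ using $3$ searchers.
   Context: An edge-labeled graph $G=(V(G),E(G),c)$ is a simple graph with $c\colon E(G)\to\{1,\dots,k\}$; $c(v)$ denotes the set of colors of edges incident to $v$. Edge search: a search strategy is a sequence of moves: placing a searcher on a vertex, removing a searcher from a vertex, or sliding a searcher from $u$ along an edge $\{u,v\}$ to $v$. Initially all edges are contaminated; a slide along an edge makes it clean; after every move, a clean edge $e$ becomes contaminated (recontamination) if some path with no searcher-occupied vertex joins an endpoint of $e$ to an endpoint of a contaminated edge. The strategy must end with all edges clean; it uses $k$ searchers if at most $k$ are simultaneously present. It is monotone if no recontamination occurs. In a search $\tilde c$-strategy each searcher $j$ has a fixed color $\tilde c(j)$, may be placed on $v$ only if $\tilde c(j)\in c(v)$, and may slide along $e$ only if $\tilde c(j)=c(e)$. The tree $T_l$ ($l\ge 3$), with colors $\{1,2,3\}$: For $i\in\{1,2\}$, $T'_i$ has root $q_i$ with three children joined to $q_i$ by edges of color 1, and each of these children has three children joined by edges of color 2. $T''_l$: a path $v_0,v_1,\dots,v_{l+1}$ with edges $e_x=\{v_x,v_{x+1}\}$ of color $(x \bmod 3)+1$ for $x\in\{0,\dots,l\}$; additionally, for each $x\in\{1,\dots,l\}$, attach to $v_x$ one pendant edge of color $(x\bmod 3)+1$ and one pendant edge of color $((x-1)\bmod 3)+1$. Let $P$ be a path $p_0p_1p_2p_3p_4$ with edges $\{p_0,p_1\},\{p_3,p_4\}$ of color 3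 and $\{p_1,p_2\},\{p_2,p_3\}$ of color 2. $T_l$ is obtained from disjoint copies of $T'_1,T'_2,T''_l,P$ by identifying $p_2$ with $v_0$, $p_0$ with $q_1$, and $p_4$ with $q_2$. *)

From mathcomp Require Import all_boot.
Set Implicit Arguments. Unset Strict Implicit. Unset Printing Implicit Defensive.

(** Edges are identified by their index in the list. *)
Definition edge := ((nat * nat) * nat)%type.
Definition elgraph := seq edge.

Definition eu (e : edge) : nat := e.1.1.
Definition ev (e : edge) : nat := e.1.2.
Definition ecol (e : edge) : nat := e.2.

Definition nth_edge (G : elgraph) (i : nat) : edge := nth ((0, 0), 0) G i.

Definition adj (G : elgraph) (x y : nat) : bool :=
  has (fun e => ((eu e == x) && (ev e == y)) || ((eu e == y) && (ev e == x))) G.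

Definition color_at (G : elgraph) (v c : nat) : bool :=
  has (fun e => ((eu e == v) || (ev e == v)) && (ecol e == c)) G.

(** * Search states: position of each of the k searchers (None = not on the
    graph) and the set of clean edges (by index). *)
Record sstate (k : nat) := SState {
  spos : 'I_k -> option nat;
  sclean : nat -> Prop }.

Definition init_state (k : nat) : sstate k := SState (fun _ => None) (fun _ => False).

Definition occupied k (pos : 'I_k -> option nat) (z : nat) : bool :=
  [exists j, pos j == Some z].

Definition free_conn (G : elgraph) k (pos : 'I_k -> option nat) (x y : nat) : Prop :=
  exists p : seq nat, [/\ path (adj G) x p, last x p = y &
                          forall z, z \in x :: p -> ~~ occupied pos z].

Definition recont (G : elgraph) k (pos : 'I_k -> option nat) (cl : nat -> Prop)
  (i : nat) : Prop :=
  exists2 j, j < size G /\ ~ cl j &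
    exists a b, (a = eu (nth_edge G i) \/ a = ev (nth_edge G i)) /\
                (b = eu (nth_edge G j) \/ b = ev (nth_edge G j)) /\
                free_conn G pos a b.

Inductive move (k : nat) :=
| Place of 'I_k & nat
| Remove of 'I_k
| Slide of 'I_k & nat.     (* slide searcher j along the edge of index i *)

Definition other (e : edge) (u : nat) : nat := if eu e == u then ev e else eu e.

(* legality of a move in a search ct-strategy (ct = colors of searchers) *)
Definition legal (G : elgraph) k (ct : 'I_k -> nat) (s : sstate k) (m : move k)
  : Prop :=
  match m with
  | Place j v => spos s j = None /\ color_at G v (ct j)
  | Remove j => spos s j <> None
  | Slide j i => i < size G /\ ecol (nth_edge G i) = ct j /\
      exists u, spos s j = Some u /\ (u = eu (nth_edge G i) \/ u = ev (nth_edge G i))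
  end.

Definition pos_after G k (s : sstate k) (m : move k) : 'I_k -> option nat :=
  match m with
  | Place j v => fun j' => if j' == j then Some v else spos s j'
  | Remove j => fun j' => if j' == j then None else spos s j'
  | Slide j i => fun j' => if j' == j then
        (match spos s j with
         | Some u => Some (other (nth_edge G i) u)
         | None => None end)
      else spos s j'
  end.

(* clean edges after the move, before recontamination *)
Definition clean_after k (s : sstate k) (m : move k) : nat -> Prop :=
  match m with
  | Slide _ i => fun i' => sclean s i' \/ i' = i
  | _ => sclean s
  end.

Definition next G k (s : sstate k) (m : move k) : sstate k :=
  SState (pos_after G s m)
    (fun i => clean_after s m i /\ ~ recont G (pos_after G s m) (clean_after s m) i).

Definition no_recont G k (s : sstate k) (m : move k) : Prop :=
  forall i, i < size G -> clean_after s m i ->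
    ~ recont G (pos_after G s m) (clean_after s m) i.

Fixpoint mono_search (G : elgraph) k (ct : 'I_k -> nat) (s : sstate k)
    (ms : seq (move k)) : Prop :=
  match ms with
  | [::] => forall i, i < size G -> sclean s i
  | m :: ms' => [/\ legal G ct s m, no_recont G s m & mono_search G ct (next G s m) ms']
  end.

(** * The tree T_l
    Vertex numbering: v_x = x (0 <= x <= l+1); pendants at v_x (1<=x<=l):
    l+2+2(x-1) (color (x mod 3)+1) and l+3+2(x-1) (color ((x-1) mod 3)+1);
    B := 3l+2: p1 = B, p3 = B+1, q1 = B+2, q2 = B+15 (= roots of T'_1, T'_2);
    in T'_i with root r: children r+1+a, grandchildren r+4+3a+b (a,b<3). *)
Definition Tprime (r : nat) : elgraph :=
  [seq ((r, r + 1 + a), 1) | a <- iota 0 3] ++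
  [seq ((r + 1 + a, r + 4 + 3 * a + b), 2) | a <- iota 0 3, b <- iota 0 3].

Definition Tsecond (l : nat) : elgraph :=
  [seq ((x, x.+1), x %% 3 + 1) | x <- iota 0 l.+1] ++
  flatten [seq [:: ((x, l + 2 + 2 * (x - 1)), x %% 3 + 1);
                   ((x, l + 3 + 2 * (x - 1)), (x - 1) %% 3 + 1)] | x <- iota 1 l].

Definition Tl (l : nat) : elgraph :=
  let B := 3 * l + 2 in
  let p1 := B in let p3 := B + 1 in let q1 := B + 2 in let q2 := B + 15 in
  Tprime q1 ++ Tprime q2 ++ Tsecond l ++
  [:: ((q1, p1), 3); ((p1, 0), 2); ((0, p3), 2); ((p3, q2), 3)].

(* We prove the stronger statement for every l >= 3.  The proof reduces the
   infinite family to one finite computation.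

   - T_l contains a copy of T_3 (the "core": T'_1, T'_2, P, the path edges
     e_0..e_3 and the pendants at v_1..v_3), which meets the rest of T_l
     only at v_4, a leaf of the core.
   - Along a monotone search every vertex incident to a clean and to a
     contaminated edge is occupied (otherwise recontamination would occur),
     and every searcher sits on a vertex of its color.
   - Some edge of each color 1, 2, 3 must be cleaned, so the three searchers
     carry the three distinct colors.
   - A concrete state is abstracted by the clean core edges and, for each
     color, the core vertex its searcher occupies if that vertex is mixed.
     Every monotone move is simulated by at most one abstract move.
   - An exhaustive exploration, checked by computation, shows that the
     abstract states reachable from the initial one never have all core
     edges clean. *)

From mathcomp Require Import all_boot zify.
From Stdlib Require Import PArith FMapPositive.
Set Implicit Arguments. Unset Strict Implicit. Unset Printing Implicit Defensive.

Definition Plist (l : nat) : elgraph :=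
  [:: ((3*l+2+2, 3*l+2),3); ((3*l+2,0),2); ((0,3*l+2+1),2); ((3*l+2+1,3*l+2+15),3)].

Lemma TlE l : Tl l = (Tprime (3*l+2+2) ++ Tprime (3*l+2+15)) ++ Tsecond l ++ Plist l.
Proof. by rewrite /Tl catA. Qed.

Lemma size_flat2 (T : Type) (f g : nat -> T) (s : seq nat) :
  size (flatten [seq [:: f x; g x] | x <- s]) = 2 * size s.
Proof. by elim: s => //= x s IH; rewrite IH mulnS. Qed.

Lemma nth_flat2 (T : Type) (d : T) (f g : nat -> T) (s : seq nat) y :
  y < 2 * size s ->
  nth d (flatten [seq [:: f x; g x] | x <- s]) y =
  if odd y then g (nth 0 s y./2) else f (nth 0 s y./2).
Proof.
elim: s y => [|x s IH] y /=; first by lia.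
case: y => [|[|y]] //= Hy.
by rewrite IH ?negbK //; move: Hy; rewrite mulnS; lia.
Qed.

Lemma size_Tsecond l : size (Tsecond l) = l.+1 + 2 * l.
Proof. by rewrite /Tsecond size_cat size_map size_iota size_flat2 size_iota. Qed.

Lemma size_Tprimes a b : size (Tprime a ++ Tprime b) = 24.
Proof. by []. Qed.

Lemma size_Tl l : size (Tl l) = 24 + l.+1 + 2 * l + 4.
Proof. by rewrite TlE size_cat size_Tprimes size_cat size_Tsecond /=; lia. Qed.

Lemma nth_Tl_trees l j : j < 24 ->
  nth_edge (Tl l) j = nth_edge (Tprime (3*l+2+2) ++ Tprime (3*l+2+15)) j.
Proof. by move=> Hj; rewrite /nth_edge TlE nth_cat size_Tprimes Hj. Qed.

Lemma nth_Tl_second l j : 24 <= j < 24 + l.+1 + 2 * l ->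
  nth_edge (Tl l) j = nth_edge (Tsecond l) (j - 24).
Proof.
move=> /andP[H1 H2]; rewrite /nth_edge TlE nth_cat size_Tprimes ifF; last by lia.
by rewrite nth_cat size_Tsecond ifT //; lia.
Qed.

Lemma nth_Tl_path l x : x <= l -> nth_edge (Tl l) (24 + x) = ((x, x.+1), x %% 3 + 1).
Proof.
move=> Hx; rewrite nth_Tl_second; last by lia.
rewrite /nth_edge /Tsecond nth_cat size_map size_iota addKn.
by rewrite ifT ?(nth_map 0) ?size_iota ?nth_iota //; lia.
Qed.

Lemma nth_Tl_pendant l y : y < 2 * l ->
  nth_edge (Tl l) (24 + l.+1 + y) =
  if odd y then ((y./2 + 1, l + 3 + 2 * (y./2 + 1 - 1)), (y./2 + 1 - 1) %% 3 + 1)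
  else ((y./2 + 1, l + 2 + 2 * (y./2 + 1 - 1)), (y./2 + 1) %% 3 + 1).
Proof.
move=> Hy; rewrite nth_Tl_second; last by lia.
rewrite /nth_edge /Tsecond nth_cat size_map size_iota.
have -> : 24 + l.+1 + y - 24 = l.+1 + y by lia.
have -> : (l.+1 + y < l.+1) = false by lia.
rewrite addKn nth_flat2 ?size_iota // nth_iota; last by rewrite -(odd_double_half y) in Hy; lia.
by rewrite addnC.
Qed.

Lemma nth_Tl_P l k : k < 4 ->
  nth_edge (Tl l) (24 + l.+1 + 2 * l + k) = nth ((0,0),0) (Plist l) k.
Proof.
move=> Hk; rewrite /nth_edge TlE nth_cat size_Tprimes.
have -> : 24 + l.+1 + 2 * l + k < 24 = false by lia.
rewrite nth_cat size_Tsecond.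
have -> : 24 + l.+1 + 2 * l + k - 24 < l.+1 + 2 * l = false by lia.
by congr nth; lia.
Qed.

Definition incid (e : edge) (y : nat) : Prop := y = eu e \/ y = ev e.

Section Monotone.
Variables (G : elgraph) (k : nat) (ct : 'I_k -> nat).

Definition guarded_state (s : sstate k) : Prop :=
  (forall x i i', i < size G -> i' < size G ->
     incid (nth_edge G i) x -> incid (nth_edge G i') x ->
     sclean s i -> ~ sclean s i' -> exists j, spos s j = Some x) /\
  (forall j x, spos s j = Some x -> color_at G x (ct j)).

Lemma guarded_init : guarded_state (init_state k).
Proof. by split. Qed.

Lemma next_clean (s : sstate k) (m : move k) i : i < size G -> no_recont G s m ->
  (sclean (next G s m) i <-> clean_after s m i).
Proof. by move=> Hi Hn; split => [[]|H] //; split => //; exact: Hn. Qed.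

Lemma color_at_incid e x : e \in G -> incid e x -> color_at G x (ecol e).
Proof. by move=> He [->|->]; apply/hasP; exists e => //; rewrite !eqxx ?orbT. Qed.

Lemma other_incid e x : incid e (other e x).
Proof. by rewrite /other /incid; case: eqP => _; [right | left]. Qed.

Lemma guarded_next (s : sstate k) (m : move k) :
  guarded_state s -> legal G ct s m -> no_recont G s m -> guarded_state (next G s m).
Proof.
move=> [Hocc Hcol] Hl Hn; split.
  move=> x i i' Hi Hi' Ii Ii' Ci Ci'.
  have Ca := (next_clean Hi Hn).1 Ci.
  have Ca' : ~ clean_after s m i' by move/(next_clean Hi' Hn).
  case: (boolP (occupied (pos_after G s m) x)) => [/existsP[j /eqP Hj]|Hfree]; first by exists j.
  case: (Hn i Hi Ca); exists i'; first by split.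
  exists x, x; split; first by case: Ii => E; [left|right].
  split; first by case: Ii' => E; [left|right].
  by exists [::]; split => //= z; rewrite inE => /eqP ->.
move=> j x /=; rewrite /pos_after; clear Hn.
case: m Hl => [j0 v | j0 | j0 i] /= Hl; case: eqP => [->|_]; try exact: Hcol.
- by case: Hl => _ H [<-].
- by [].
- case: Hl => Hi [<- [u [-> _]]] [<-].
  by apply: color_at_incid; [exact: mem_nth | exact: other_incid].
Qed.

Lemma cleaned_colors (s : sstate k) ms : mono_search G ct s ms ->
  (forall i, i < size G -> sclean s i -> exists j, ct j = ecol (nth_edge G i)) ->
  forall i, i < size G -> exists j, ct j = ecol (nth_edge G i).
Proof.
elim: ms s => [|m ms IH] s /=; first by move=> Hall H i Hi; exact: H Hi (Hall i Hi).
case=> Hl Hn Hr H; apply: IH Hr _ => i Hi /(next_clean Hi Hn).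
case: m Hl {Hn} => [j v|j|j i'] Hl /=; try exact: H Hi.
case=> [Hc|->]; first exact: H Hi Hc.
by case: Hl => _ [Hc _]; exists j.
Qed.

End Monotone.

Definition actor k (m : move k) : 'I_k :=
  match m with Place j _ | Remove j | Slide j _ => j end.

Lemma pos_after_other G k (s : sstate k) (m : move k) j :
  j != actor m -> pos_after G s m j = spos s j.
Proof. by case: m => [j0 v|j0|j0 i] /= /negbTE ->. Qed.

(* The core: the tree T_3 with its 39 vertices and 38 edges, with explicit
   tables for the exhaustive search below (each table is checked against its
   definition later on). *)
Definition core : elgraph :=
  [:: ((13, 14), 1); ((13, 15), 1); ((13, 16), 1); ((14, 17), 2); ((14, 18), 2);
      ((14, 19), 2); ((15, 20), 2); ((15, 21), 2); ((15, 22), 2); ((16, 23), 2);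
      ((16, 24), 2); ((16, 25), 2); ((26, 27), 1); ((26, 28), 1); ((26, 29), 1);
      ((27, 30), 2); ((27, 31), 2); ((27, 32), 2); ((28, 33), 2); ((28, 34), 2);
      ((28, 35), 2); ((29, 36), 2); ((29, 37), 2); ((29, 38), 2); ((0, 1), 1); ((1, 2), 2);
      ((2, 3), 3); ((3, 4), 1); ((1, 5), 2); ((1, 6), 1); ((2, 7), 3); ((2, 8), 2);
      ((3, 9), 1); ((3, 10), 3); ((13, 11), 3); ((11, 0), 2); ((0, 12), 2); ((12, 26), 3)].

Definition core_incident (a i : nat) : bool :=
  (eu (nth_edge core i) == a) || (ev (nth_edge core i) == a).

(* star_table.[a] lists the core edges incident to a. *)
Definition star_table : seq (seq nat) :=
  [:: [:: 24; 35; 36]; [:: 24; 25; 28; 29]; [:: 25; 26; 30; 31]; [:: 26; 27; 32; 33];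
      [:: 27]; [:: 28]; [:: 29]; [:: 30]; [:: 31]; [:: 32]; [:: 33]; [:: 34; 35];
      [:: 36; 37]; [:: 0; 1; 2; 34]; [:: 0; 3; 4; 5]; [:: 1; 6; 7; 8]; [:: 2; 9; 10; 11];
      [:: 3]; [:: 4]; [:: 5]; [:: 6]; [:: 7]; [:: 8]; [:: 9]; [:: 10]; [:: 11];
      [:: 12; 13; 14; 37]; [:: 12; 15; 16; 17]; [:: 13; 18; 19; 20]; [:: 14; 21; 22; 23];
      [:: 15]; [:: 16]; [:: 17]; [:: 18]; [:: 19]; [:: 20]; [:: 21]; [:: 22]; [:: 23]].

(* The core vertices of degree at least 2. *)
Definition inner : seq nat := [:: 0; 1; 2; 3; 11; 12; 13; 14; 15; 16; 26; 27; 28; 29].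

(* color_table.[a] lists the colors of the core edges incident to a. *)
Definition color_table : seq (seq nat) :=
  [:: [:: 1; 2]; [:: 1; 2]; [:: 2; 3]; [:: 1; 3]; [:: 1]; [:: 2]; [:: 1]; [:: 3]; [:: 2];
      [:: 1]; [:: 3]; [:: 2; 3]; [:: 2; 3]; [:: 1; 3]; [:: 1; 2]; [:: 1; 2]; [:: 1; 2];
      [:: 2]; [:: 2]; [:: 2]; [:: 2]; [:: 2]; [:: 2]; [:: 2]; [:: 2]; [:: 2]; [:: 1; 3];
      [:: 1; 2]; [:: 1; 2]; [:: 1; 2]; [:: 2]; [:: 2]; [:: 2]; [:: 2]; [:: 2]; [:: 2];
      [:: 2]; [:: 2]; [:: 2]].

Lemma coreE : core = Tl 3.
Proof. by vm_compute. Qed.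

(* Core vertices 0..4 (v_0..v_4) are fixed, the pendant vertices 5..10 of
   v_1..v_3 are shifted by n, and the vertices 11..38 (P, T'_1, T'_2) by 3n. *)
Definition lift_vertex (n a : nat) : nat :=
  if a <= 4 then a else if a <= 10 then a + n else a + 3 * n.

(* Core edges 0..27 (T'_1, T'_2, e_0..e_3) keep their index, the six pendant
   edges at v_1..v_3 are shifted by n and the four edges of P by 3n. *)
Definition lift_edge (n i : nat) : nat :=
  if i < 28 then i else if i < 34 then i + n else i + 3 * n.

Definition lift_e (n : nat) (e : edge) : edge :=
  ((lift_vertex n (eu e), lift_vertex n (ev e)), ecol e).

Definition unlift_vertex (n x : nat) : option nat :=
  if x <= 4 then Some x else if (n + 5 <= x) && (x <= n + 10) then Some (x - n)
  else if (3 * n + 11 <= x) && (x <= 3 * n + 38) then Some (x - 3 * n) else None.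

Lemma lift_vertexK n a : a < 39 -> unlift_vertex n (lift_vertex n a) = Some a.
Proof.
rewrite /lift_vertex /unlift_vertex => Ha.
case: (leqP a 4) => H1; first by rewrite H1.
case: (leqP a 10) => H2.
  have -> : (a + n <= 4) = false by lia.
  have -> : (n + 5 <= a + n) && (a + n <= n + 10) by lia.
  by congr Some; lia.
have -> : (a + 3 * n <= 4) = false by lia.
have -> : (n + 5 <= a + 3 * n) && (a + 3 * n <= n + 10) = false by lia.
have -> : (3 * n + 11 <= a + 3 * n) && (a + 3 * n <= 3 * n + 38) by lia.
by congr Some; lia.
Qed.

Lemma unlift_vertexP n x a : unlift_vertex n x = Some a -> a < 39 /\ x = lift_vertex n a.
Proof.
rewrite /unlift_vertex /lift_vertex.
case: (leqP x 4) => H1; first by case=> <-; rewrite H1; split => //; lia.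
case: ifP => H2.
  case=> <-; split; first lia.
  have -> : (x - n <= 4) = false by lia.
  have -> : (x - n <= 10) by lia.
  lia.
case: ifP => H3 //; case=> <-; split; first lia.
have -> : (x - 3 * n <= 4) = false by lia.
have -> : (x - 3 * n <= 10) = false by lia.
lia.
Qed.

Lemma lift_vertex_inj n a b : a < 39 -> b < 39 -> lift_vertex n a = lift_vertex n b -> a = b.
Proof. by move=> Ha Hb E; have := lift_vertexK n Ha; rewrite E lift_vertexK // => -[]. Qed.

Lemma lift_edge_lt n i : i < 38 -> lift_edge n i < size (Tl (n + 3)).
Proof. move=> Hi; rewrite size_Tl /lift_edge; case: ifP => H1; last case: ifP => H2; lia. Qed.

Lemma lift_edge_inj n i i' : i < 38 -> i' < 38 -> lift_edge n i = lift_edge n i' -> i = i'.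
Proof. by move=> H1 H2; rewrite /lift_edge; repeat (case: ifP; move=> ?); lia. Qed.

Lemma edge3 (a b c a' b' c' : nat) :
  a = a' -> b = b' -> c = c' -> ((a, b), c) = ((a', b'), c').
Proof. by move=> -> -> ->. Qed.

Lemma nth_lift_edge n i : i < 38 ->
  nth_edge (Tl (n + 3)) (lift_edge n i) = lift_e n (nth_edge core i).
Proof.
move=> Hi; have [H24|H24] := ltnP i 24.
  rewrite /lift_edge ifT; last by lia.
  rewrite nth_Tl_trees // coreE nth_Tl_trees //.
  do 24 (case: i Hi H24 => [|i] Hi H24;
    first by rewrite /lift_e /lift_vertex /eu /ev /ecol /=; apply: edge3; lia).
  by [].
have [H28|H28] := ltnP i 28.
  rewrite /lift_edge ifT //; have -> : i = 24 + (i - 24) by lia.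
  rewrite nth_Tl_path; last by lia.
  rewrite coreE nth_Tl_path; last by lia.
  by rewrite /lift_e /lift_vertex /eu /ev /ecol /= !ifT //; lia.
have [H34|H34] := ltnP i 34.
  rewrite /lift_edge ifF; last by lia. rewrite ifT //.
  have -> : i + n = 24 + (n + 3).+1 + (i - 28) by lia.
  rewrite nth_Tl_pendant; last by lia.
  have -> : i = 24 + 3.+1 + (i - 28) by lia.
  rewrite coreE nth_Tl_pendant; last by lia.
  have : i - 28 < 6 by lia.
  move: (i - 28) => y; do 6 (case: y => [|y];
    first by move=> _; rewrite /lift_e /lift_vertex /eu /ev /ecol /=; apply: edge3; lia).
  by [].
rewrite /lift_edge ifF; last by lia. rewrite ifF; last by lia.
have -> : i + 3 * n = 24 + (n + 3).+1 + 2 * (n + 3) + (i - 34) by lia.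
rewrite nth_Tl_P; last by lia.
have -> : i = 24 + 3.+1 + 2 * 3 + (i - 34) by lia.
rewrite coreE nth_Tl_P; last by lia.
have : i - 34 < 4 by lia.
move: (i - 34) => y; do 4 (case: y => [|y];
  first by move=> _; rewrite /lift_e /lift_vertex /eu /ev /ecol /=; apply: edge3; lia).
by [].
Qed.

Definition outside (n x : nat) : Prop := forall a, unlift_vertex n x = Some a -> a = 4.

Lemma outsideP n y : 4 <= y -> y < n + 5 \/ (n + 10 < y /\ y < 3 * n + 11) -> outside n y.
Proof.
move=> H1 H2 a; rewrite /unlift_vertex.
case: (leqP y 4) => H3.
  have -> : y = 4 by lia.
  by case.
have -> : (n + 5 <= y) && (y <= n + 10) = false by lia.
by have -> : (3 * n + 11 <= y) && (y <= 3 * n + 38) = false by lia.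
Qed.

(* Every edge of T_(n+3) either is the image of a core edge, or has both
   endpoints outside the core (the middle segment of the path and its
   pendants, attached to the core only at v_4). *)
Lemma edge_classification n j : j < size (Tl (n + 3)) ->
  (exists2 i, i < 38 & j = lift_edge n i) \/
  ((forall i, i < 38 -> j != lift_edge n i) /\
   forall y, incid (nth_edge (Tl (n + 3)) j) y -> outside n y).
Proof.
rewrite size_Tl => Hj.
have [H28|H28] := ltnP j 28.
  by left; exists j => //; [lia | rewrite /lift_edge ifT].
have [H1|H1] := ltnP j (28 + n).
  right; split.
    by move=> i Hi; rewrite /lift_edge; case: ifP => ?; [lia | case: ifP => ?; lia].
  have -> : j = 24 + (j - 24) by lia.
  rewrite nth_Tl_path; last by lia.
  by move=> y [] ->; rewrite /eu /ev /=; apply: outsideP; lia.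
have [H2|H2] := ltnP j (24 + (n + 3).+1 + 2 * (n + 3)); last first.
  left; exists (j - 3 * n); first by lia.
  by rewrite /lift_edge; case: ifP => ?; [lia | rewrite ifF; lia].
have [H3|H3] := ltnP j (34 + n).
  left; exists (j - n); first by lia.
  by rewrite /lift_edge; case: ifP => ?; [lia | rewrite ifT; lia].
right; split.
  by move=> i Hi; rewrite /lift_edge; case: ifP => ?; [lia | case: ifP => ?; lia].
have -> : j = 24 + (n + 3).+1 + (j - 28 - n) by lia.
rewrite nth_Tl_pendant; last by lia.
have Hy : 6 <= j - 28 - n < 2 * (n + 3) by lia.
move: (j - 28 - n) Hy => y Hy; have E := odd_double_half y.
by case: (odd y) E => /= E z [] ->; rewrite /eu /ev /=; apply: outsideP; lia.
Qed.

(* An abstract state (C, P): C.[i] says whether core edge i is clean, and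
   P.[k] is Some a when the searcher of color k.+1 stands on the core vertex
   a and a is mixed; otherwise P.[k] = None (the searcher may be anywhere
   else, its exact position does not matter). *)
Definition abs_state := (seq bool * seq (option nat))%type.

Definition mixed (C : seq bool) (v : nat) : bool :=
  let l := nth [::] star_table v in
  has (fun i => nth false C i) l && has (fun i => ~~ nth false C i) l.

Definition color_ok (k : nat) (a : nat) : bool := k.+1 \in nth [::] color_table a.

Definition guarded (P : seq (option nat)) v := Some v \in P.

(* Move the searcher of color k.+1 to x (None: off the mixed vertices); mv is
   the mixedness vector of C.  The new position must be allowed and mixed,
   and the vertex left must stay guarded if it is mixed. *)
Definition abs_reposition (C : seq bool) (P : seq (option nat)) (mv : seq bool)
    (k : nat) (x : option nat) : option abs_state :=
  let P' := set_nth None P k x in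
  if (if x is Some v then color_ok k v && nth false mv v else true) &&
     (if nth None P k is Some v then ~~ nth false mv v || guarded P' v else true)
  then Some (C, P') else None.

(* In a slide of searcher k from u to w, a searcher k' recorded as None may
   actually stand on u or w, which may just have become mixed.  A guess g
   tells for each k' whether it stays (0), is on u (1) or is on w (2). *)
Definition guessed_pos (P : seq (option nat)) (k u w : nat) (g : seq nat) (k' : nat)
    : option nat :=
  if k' == k then Some w else
  match nth 0 g k' with 0 => nth None P k' | 1 => Some u | _ => Some w end.

Definition guess_options (P : seq (option nat)) (k u w k' : nat) : seq nat :=
  if k' == k then [:: 0] else
  if nth None P k' == None then
    0 :: (if color_ok k' u then [:: 1] else [::]) ++ (if color_ok k' w then [:: 2] else [::])
  else [:: 0].

Definition guesses (P : seq (option nat)) (k u w : nat) : seq (seq nat) :=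
  [seq [:: ab.1; ab.2; c]
     | ab <- [seq (a, b) | a <- guess_options P k u w 0, b <- guess_options P k u w 1],
       c <- guess_options P k u w 2].

(* Mixedness after cleaning an edge uw: only u and w can change. *)
Definition mixed_after (mv : seq bool) (u w : nat) (mu mw : bool) (v : nat) : bool :=
  if v == u then mu else if v == w then mw else nth false mv v.

Definition keep_if (f : nat -> bool) (o : option nat) : option nat :=
  if o is Some a then (if f a then o else None) else None.

(* All abstract outcomes of sliding searcher k along core edge i from u to
   w: the searcher must be on u (recorded, or u not mixed), edge i becomes
   clean, and u and w must be guarded if they are mixed afterwards. *)
Definition abs_slides (C : seq bool) (P : seq (option nat)) (mv : seq bool)
    (i k u w : nat) : seq abs_state :=
  if (nth None P k == Some u) || ((nth None P k == None) && ~~ nth false mv u) then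
    let C' := set_nth false C i true in
    let mu := mixed C' u in let mw := mixed C' w in
    pmap (fun g =>
      let Q := map (fun k' => keep_if (mixed_after mv u w mu mw) (guessed_pos P k u w g k'))
                   (iota 0 3) in
      if (~~ mu || guarded Q u) && (~~ mw || guarded Q w) then Some (C', Q) else None)
      (guesses P k u w)
  else [::].

Definition abs_slide_along (C : seq bool) (P : seq (option nat)) (mv : seq bool)
    (i : nat) (e : edge) (d : bool) : seq abs_state :=
  abs_slides C P mv i (ecol e).-1 (if d then eu e else ev e) (if d then ev e else eu e).

Definition reposition_moves : seq (nat * option nat) :=
  [seq (k, x) | k <- iota 0 3, x <- None :: map Some inner].

Definition slide_moves : seq ((nat * edge) * bool) :=
  [seq (ie, d) | ie <- zip (iota 0 38) core, d <- [:: true; false]].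

Definition abs_succ (s : abs_state) : seq abs_state :=
  let C := s.1 in let P := s.2 in
  let mv := map (mixed C) (iota 0 39) in
  pmap (fun kx => abs_reposition C P mv kx.1 kx.2) reposition_moves ++
  flatten (map (fun c => abs_slide_along C P mv c.1.1 c.1.2 c.2) slide_moves).

Definition abs_init : abs_state := (nseq 38 false, nseq 3 None).

Definition abs_final (s : abs_state) : bool := all id s.1.

Fixpoint push_bits (bs : seq bool) (acc : positive) : positive :=
  match bs with [::] => acc | b :: bs => push_bits bs (if b then xI acc else xO acc) end.

Definition encode_pos (o : option nat) : seq bool :=
  if o is Some v then true :: rcons (nseq v true) false else [:: false].

Definition state_key (s : abs_state) : positive :=
  push_bits (s.1 ++ flatten (map encode_pos s.2)) xH.

(* Graph exploration from a work list; its correctness is irrelevant, since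
   the result is checked afterwards by [certificate]. *)
Fixpoint explore (fuel : nat) (work : seq abs_state) (vis : PositiveMap.t abs_state)
    : seq abs_state * PositiveMap.t abs_state :=
  match fuel with 0 => (work, vis) | fuel.+1 =>
  match work with [::] => (work, vis) | s :: work' =>
    let '(vis', new) := foldl (fun acc t => let '(v, nw) := acc in
         match PositiveMap.find (state_key t) v with Some _ => acc
         | None => (PositiveMap.add (state_key t) t v, t :: nw) end) (vis, [::]) (abs_succ s) in
    explore fuel (new ++ work') vis'
  end end.

Fixpoint explore_rounds (n : nat) (work : seq abs_state) (vis : PositiveMap.t abs_state)
    : PositiveMap.t abs_state :=
  match n with 0 => vis | n.+1 => let '(w, v) := explore 1000 work vis in explore_rounds n w v end.

Definition explored : PositiveMap.t abs_state :=
  explore_rounds 1000 [:: abs_init]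
    (PositiveMap.add (state_key abs_init) abs_init (PositiveMap.empty _)).

Definition visited (R : PositiveMap.t abs_state) (t : abs_state) : bool :=
  PositiveMap.find (state_key t) R == Some t.

(* R contains the initial state, is closed under abs_succ, and contains no
   final state (the explored map has 44492 states). *)
Definition certificate (R : PositiveMap.t abs_state) : bool :=
  visited R abs_init &&
  all (fun ks => ~~ abs_final ks.2 && all (visited R) (abs_succ ks.2)) (PositiveMap.elements R).

(* Checked by the virtual machine; the kernel re-checks the cast at Qed. *)
Lemma certificate_ok : certificate explored = true.
Proof. vm_cast_no_check (erefl true). Qed.

Lemma all_In (A : Type) (p : A -> bool) (l : list A) x : all p l -> List.In x l -> p x.
Proof. elim: l => //= y l IH /andP[py pl] [<-|] //; exact: IH. Qed.

Lemma star_tableE :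
  star_table = [seq [seq i <- iota 0 38 | core_incident a i] | a <- iota 0 39].
Proof. by vm_compute. Qed.

Lemma innerE : inner = [seq a <- iota 0 39 | 1 < size (nth [::] star_table a)].
Proof. by vm_compute. Qed.

Lemma color_tableE :
  all (fun a => all (fun k => color_ok k a == color_at core a k.+1) (iota 0 3)) (iota 0 39).
Proof. by vm_compute. Qed.

Lemma core_edge_bounds i : i < 38 ->
  eu (nth_edge core i) < 39 /\ ev (nth_edge core i) < 39.
Proof.
move=> Hi; suff /allP/(_ i) :
    all (fun i => (eu (nth_edge core i) < 39) && (ev (nth_edge core i) < 39)) (iota 0 38)
  by rewrite mem_iota => /(_ Hi) /andP.
by vm_compute.
Qed.

Lemma star_tableP a i : (i \in nth [::] star_table a) = (i < 38) && core_incident a i.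
Proof.
case: (ltnP a 39) => Ha.
  by rewrite star_tableE (nth_map 0) ?size_iota // nth_iota // mem_filter mem_iota andbC.
rewrite nth_default ?star_tableE ?size_map ?size_iota // in_nil; case: (ltnP i 38) => Hi //=.
have [H1 H2] := core_edge_bounds Hi.
by apply/esym/norP; split; apply/eqP; lia.
Qed.

Lemma mixedP C a : mixed C a ->
  exists i i', [/\ i < 38, i' < 38, core_incident a i, core_incident a i' &
                   nth false C i && ~~ nth false C i'].
Proof.
rewrite /mixed => /andP[/hasP[i Hi Ci] /hasP[i' Hi' Ci']].
move: Hi Hi'; rewrite !star_tableP => /andP[? ?] /andP[? ?].
by exists i, i'; split => //; rewrite Ci.
Qed.

Lemma mixed_inner C a : mixed C a -> [/\ a < 39, a != 4 & a \in inner].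
Proof.
case: (ltnP a 39) => Ha; last first.
  by rewrite /mixed nth_default // size_map size_iota.
have Hin : (a \in inner) = (1 < size (nth [::] star_table a)).
  by rewrite innerE mem_filter mem_iota /= Ha andbT.
have H4 : 1 < size (nth [::] star_table a) -> a != 4 by apply: contraTneq => ->.
rewrite /mixed Hin; case: (ltnP 1 _) => [H1|]; first by move=> _; split => //; exact: H4.
by case: (nth [::] star_table a) => [|x [|y l]] //= _; rewrite !orbF; case: (nth false C x).
Qed.

Lemma mixed_set C i a : ~~ core_incident a i -> mixed (set_nth false C i true) a = mixed C a.
Proof.
move=> Hn; rewrite /mixed.
have E : {in nth [::] star_table a, forall j, nth false (set_nth false C i true) j = nth false C j}.
  move=> j; rewrite star_tableP => /andP[_ Hj]; rewrite nth_set_nth /=.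
  by case: eqP => // Eij; move: Hn; rewrite -Eij Hj.
by rewrite (eq_in_has E) (eq_in_has (fun j Hj => congr1 negb (E j Hj))).
Qed.

Lemma color_okE k a : k < 3 -> a < 39 -> color_ok k a = color_at core a k.+1.
Proof.
move=> Hk Ha; apply/eqP.
have /allP/(_ a) := color_tableE; rewrite mem_iota => /(_ Ha) /allP/(_ k).
by rewrite mem_iota; apply.
Qed.

(* s belongs to the explored set; by certificate_ok this set contains the
   initial state, is closed under abs_succ and contains no final state. *)
Definition reachable (s : abs_state) : Prop :=
  PositiveMap.find (state_key s) explored = Some s.

Lemma explored_closed s : reachable s ->
  ~~ abs_final s && all (visited explored) (abs_succ s).
Proof.
move=> Hs; have := certificate_ok; rewrite /certificate => /andP[_ H].
exact: (all_In H (PositiveMap.elements_correct _ _ Hs)).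
Qed.

Lemma reachable_init : reachable abs_init.
Proof. by have := certificate_ok; rewrite /certificate => /andP[/eqP]. Qed.

Lemma reachable_succ s t : reachable s -> t \in abs_succ s -> reachable t.
Proof. by move/explored_closed => /andP[_ /allP/(_ _ _)] H /H /eqP. Qed.

Lemma reachable_not_final s : reachable s -> ~~ abs_final s.
Proof. by move/explored_closed => /andP[]. Qed.

Lemma nth_mixed_vector C a : a < 39 -> nth false (map (mixed C) (iota 0 39)) a = mixed C a.
Proof. by move=> Ha; rewrite (nth_map 0) ?size_iota // nth_iota. Qed.

Lemma abs_succ_reposition C P k x t : (k, x) \in reposition_moves ->
  abs_reposition C P (map (mixed C) (iota 0 39)) k x = Some t -> t \in abs_succ (C, P).
Proof.
move=> Hc Ht; rewrite /abs_succ mem_cat mem_pmap; apply/orP; left.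
by apply/mapP; exists (k, x) => //=; rewrite Ht.
Qed.

Lemma abs_succ_slide C P i d t : i < 38 ->
  t \in abs_slide_along C P (map (mixed C) (iota 0 39)) i (nth_edge core i) d ->
  t \in abs_succ (C, P).
Proof.
move=> Hi Ht; rewrite /abs_succ mem_cat; apply/orP; right.
apply/flatten_mapP; exists ((i, nth_edge core i), d) => //.
apply: allpairs_f; last by rewrite !inE; case: (d).
have <- : nth (0, ((0,0),0)) (zip (iota 0 38) core) i = (i, nth_edge core i).
  by rewrite nth_zip // nth_iota.
by apply: mem_nth; rewrite size_zip size_iota.
Qed.

Lemma guesses_mem P k u w g0 g1 g2 :
  g0 \in guess_options P k u w 0 -> g1 \in guess_options P k u w 1 ->
  g2 \in guess_options P k u w 2 -> [:: g0; g1; g2] \in guesses P k u w.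
Proof.
move=> H0 H1 H2; apply/allpairsP; exists ((g0, g1), g2); split => //.
by apply/allpairsP; exists (g0, g1).
Qed.

Lemma abs_slides_mem C P mv i k u w g :
  (nth None P k == Some u) || ((nth None P k == None) && ~~ nth false mv u) ->
  g \in guesses P k u w ->
  let C' := set_nth false C i true in
  let Q := map (fun k' => keep_if (mixed_after mv u w (mixed C' u) (mixed C' w))
                                  (guessed_pos P k u w g k'))
             (iota 0 3) in
  (~~ mixed C' u || guarded Q u) && (~~ mixed C' w || guarded Q w) ->
  (C', Q) \in abs_slides C P mv i k u w.
Proof.
move=> Hc Hg C' Q Hv; rewrite /abs_slides Hc mem_pmap.
by apply/mapP; exists g => //; rewrite -/C' -/Q Hv.
Qed.

Section Simulation.
Variables (n : nat) (ct : 'I_3 -> nat) (sg : nat -> 'I_3).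
Hypothesis sgP : forall k, k < 3 -> ct (sg k) = k.+1.
Hypothesis sg_surj : forall j, exists2 k, k < 3 & sg k = j.

Local Notation G := (Tl (n + 3)).

Definition abs_pos (C : seq bool) (o : option nat) : option nat :=
  if o is Some x then
    (if unlift_vertex n x is Some a then (if mixed C a then Some a else None) else None)
  else None.

Definition abs_positions (C : seq bool) (s : sstate 3) : seq (option nat) :=
  map (fun k => abs_pos C (spos s (sg k))) (iota 0 3).

Definition simulates (s : sstate 3) (t : abs_state) : Prop :=
  [/\ size t.1 = 38, forall i, i < 38 -> (nth false t.1 i <-> sclean s (lift_edge n i))
    & t.2 = abs_positions t.1 s].

Lemma sg_inj k k' : k < 3 -> k' < 3 -> sg k = sg k' -> k = k'.
Proof. by move=> H1 H2 E; have := sgP H1; rewrite E sgP // => -[]. Qed.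

Lemma nth_abs_positions C s k : k < 3 -> nth None (abs_positions C s) k = abs_pos C (spos s (sg k)).
Proof. by move=> Hk; rewrite /abs_positions (nth_map 0) ?size_iota // nth_iota. Qed.

Lemma abs_pos_lift C a : a < 39 ->
  abs_pos C (Some (lift_vertex n a)) = if mixed C a then Some a else None.
Proof. by move=> Ha; rewrite /abs_pos lift_vertexK. Qed.

Lemma abs_posP C o a : abs_pos C o = Some a -> [/\ o = Some (lift_vertex n a), a < 39 & mixed C a].
Proof.
case: o => [x|] //=; case E: (unlift_vertex n x) => [b|] //; case: ifP => // M [<-].
by have [Hb ->] := unlift_vertexP E.
Qed.

Lemma abs_positions_eq C s1 s2 :
  (forall k, k < 3 -> abs_pos C (spos s1 (sg k)) = abs_pos C (spos s2 (sg k))) ->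
  abs_positions C s1 = abs_positions C s2.
Proof. by move=> H; apply/eq_in_map => k; rewrite mem_iota => /andP[_ Hk]; apply: H. Qed.

Lemma abs_positions_set C s1 s2 k : k < 3 ->
  (forall k', k' < 3 -> k' != k -> spos s2 (sg k') = spos s1 (sg k')) ->
  abs_positions C s2 = set_nth None (abs_positions C s1) k (abs_pos C (spos s2 (sg k))).
Proof.
move=> Hk H; apply: (@eq_from_nth _ None).
  by rewrite size_set_nth /abs_positions !size_map !size_iota; apply/esym/maxn_idPr.
rewrite /abs_positions size_map size_iota => k' Hk'.
rewrite nth_set_nth /= -/(abs_positions C s1) -/(abs_positions C s2) !nth_abs_positions //.
by case: eqP => [->|/eqP ne] //; rewrite H.
Qed.

Lemma incid_lift a i : i < 38 -> core_incident a i ->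
  incid (nth_edge G (lift_edge n i)) (lift_vertex n a).
Proof.
move=> Hi; rewrite nth_lift_edge // /lift_e /core_incident /incid /eu /ev /=.
by case/orP => /eqP ->; [left | right].
Qed.

Lemma mixed_occupied s t a : guarded_state G ct s -> simulates s t -> mixed t.1 a ->
  exists j, spos s j = Some (lift_vertex n a).
Proof.
move=> [Hocc _] [_ HC _] /mixedP [i [i' [Hi Hi' Ia Ia' /andP[Ci Ci']]]].
apply: (Hocc _ (lift_edge n i) (lift_edge n i')); try exact: lift_edge_lt; try exact: incid_lift.
  by apply/HC.
by move/HC => H; move: Ci'; rewrite H.
Qed.

Lemma mixed_guarded s t a : guarded_state G ct s -> simulates s t -> mixed t.1 a ->
  guarded t.2 a.
Proof.
move=> HI HR Hm; have [j Hj] := mixed_occupied HI HR Hm.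
have [Ha _ _] := mixed_inner Hm; have [k Hk Ek] := sg_surj j.
case: HR => _ _ ->; rewrite /guarded.
have <- : nth None (abs_positions t.1 s) k = Some a.
  by rewrite nth_abs_positions // Ek Hj abs_pos_lift // Hm.
by apply: mem_nth; rewrite size_map size_iota.
Qed.

Lemma lifted_star a j : a < 39 -> a != 4 -> j < size G ->
  incid (nth_edge G j) (lift_vertex n a) ->
  exists2 i, i < 38 & j = lift_edge n i /\ core_incident a i.
Proof.
move=> Ha Ha4 Hj Hinc; case: (edge_classification Hj) => [[i Hi Ej]|[_ Hout]]; last first.
  by have := Hout _ Hinc a (lift_vertexK n Ha); move/eqP: Ha4.
exists i => //; split => //.
move: Hinc; rewrite Ej nth_lift_edge // /lift_e /incid /core_incident /eu /ev /=.
have [H1 H2] := core_edge_bounds Hi.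
by case=> /lift_vertex_inj E; apply/orP; [left | right]; apply/eqP; rewrite E.
Qed.

Lemma searcher_color_ok s k a : guarded_state G ct s -> k < 3 ->
  spos s (sg k) = Some (lift_vertex n a) -> a < 39 -> a != 4 -> color_ok k a.
Proof.
move=> [_ Hcol] Hk Hp Ha Ha4; have := Hcol _ _ Hp; rewrite sgP // color_okE //.
case/hasP => e He /andP[Hi /eqP Hc].
have Hj : index e G < size G by rewrite index_mem.
have Ee : nth_edge G (index e G) = e by rewrite /nth_edge nth_index.
have Hie : incid (nth_edge G (index e G)) (lift_vertex n a).
  by rewrite Ee /incid; case/orP: Hi => /eqP <-; [left|right].
have [i Hi3 [Ej Hinc]] := lifted_star Ha Ha4 Hj Hie.
apply/hasP; exists (nth_edge core i); first by apply: mem_nth.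
move: Hinc Hc; rewrite /core_incident => -> /=.
have := nth_lift_edge n Hi3; rewrite -Ej Ee => ->.
by rewrite /lift_e /ecol /= => ->.
Qed.

(* A move that leaves the clean core edges unchanged and moves only the
   searcher of color k.+1 is simulated by a stutter or an abstract
   repositioning of that searcher.  This covers placements, removals and
   slides along edges outside the core. *)
Lemma sim_reposition s s' C k : k < 3 -> guarded_state G ct s' ->
  simulates s (C, abs_positions C s) ->
  (forall i, i < 38 -> (sclean s' (lift_edge n i) <-> sclean s (lift_edge n i))) ->
  (forall k', k' < 3 -> k' != k -> spos s' (sg k') = spos s (sg k')) ->
  exists t', simulates s' t' /\
    (t' = (C, abs_positions C s) \/ t' \in abs_succ (C, abs_positions C s)).
Proof.
move=> Hk HI' [HsC HC _] Hcl Hoth.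
have HR' : simulates s' (C, abs_positions C s') by split => // i Hi; rewrite Hcl // HC.
exists (C, abs_positions C s'); split => //; set x := abs_pos C (spos s' (sg k)).
have Hset := abs_positions_set C Hk Hoth; rewrite -/x in Hset.
case: (eqVneq x (abs_pos C (spos s (sg k)))) => [Ex|ne].
  left; congr pair; apply: abs_positions_eq => k' Hk'.
  by case: (eqVneq k' k) => [->|/Hoth -> //]; rewrite -Ex.
right; apply: (abs_succ_reposition (k := k) (x := x)).
  rewrite /reposition_moves; apply/allpairsP; exists (k, x).
  split => //; first by rewrite mem_iota /=; lia.
  case Hx: x => [a|]; rewrite inE //; have [_ _ M] := abs_posP Hx.
  by have [_ _ Hin] := mixed_inner M; rewrite (mem_map (@Some_inj _)) Hin orbT.
rewrite /abs_reposition -Hset nth_abs_positions //.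
have -> :
  (if x is Some v then color_ok k v && nth false (map (mixed C) (iota 0 39)) v else true) = true.
  case Hx: x => [a|] //; have [Ep Ha M] := abs_posP Hx; have [_ Ha4 _] := mixed_inner M.
  by rewrite nth_mixed_vector // M andbT (searcher_color_ok HI' Hk Ep).
case Ho: (abs_pos C (spos s (sg k))) => [a|] //; have [_ Ha M] := abs_posP Ho.
by rewrite nth_mixed_vector // M (mixed_guarded HI' HR' M).
Qed.

Lemma slide_geometry k i0 u0 : k < 3 -> i0 < 38 ->
  ecol (nth_edge G (lift_edge n i0)) = ct (sg k) ->
  incid (nth_edge G (lift_edge n i0)) u0 ->
  let e := nth_edge core i0 in
  exists d : bool,
  [/\ (ecol e).-1 = k, u0 = lift_vertex n (if d then eu e else ev e),
      other (nth_edge G (lift_edge n i0)) u0 = lift_vertex n (if d then ev e else eu e) &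
      forall a, core_incident a i0 =
                (a == if d then eu e else ev e) || (a == if d then ev e else eu e)].
Proof.
move=> Hk Hi0 Hcol Hinc e; rewrite nth_lift_edge // in Hcol Hinc *.
exists (u0 == lift_vertex n (eu e)); split.
- by move: Hcol; rewrite /lift_e /ecol /= sgP // => ->.
- by case: eqP => [//|ne]; case: Hinc.
- rewrite /other; case: eqP => [E|ne]; first by rewrite -E eqxx.
  by case: eqP => [E|_]; [case: ne | case: Hinc].
- by move=> a; rewrite /core_incident -/e !(eq_sym a); case: ifP => _ //; exact: orbC.
Qed.

Section CoreSlide.
Variables (s s' : sstate 3) (C : seq bool) (k i0 u w : nat).
Hypotheses (Hk : k < 3) (Hu : u < 39) (Hw : w < 39).
Hypothesis Hinc : forall a, core_incident a i0 = (a == u) || (a == w).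
Hypothesis Hoth : forall k', k' < 3 -> k' != k -> spos s' (sg k') = spos s (sg k').
Hypothesis Hto : spos s' (sg k) = Some (lift_vertex n w).
Hypothesis HI' : guarded_state G ct s'.

Local Notation C' := (set_nth false C i0 true).
Local Notation mv := (map (mixed C) (iota 0 39)).

(* How the abstract slide guesses the other searchers: 1 (resp. 2) if the
   searcher stands at u (resp. w) and this vertex just became mixed. *)
Definition slide_choice (k' : nat) : nat :=
  if k' == k then 0 else
  if [&& spos s (sg k') == Some (lift_vertex n u), ~~ mixed C u & mixed C' u] then 1 else
  if [&& spos s (sg k') == Some (lift_vertex n w), ~~ mixed C w & mixed C' w] then 2 else 0.

Lemma mixed_afterE a : a < 39 -> mixed_after mv u w (mixed C' u) (mixed C' w) a = mixed C' a.
Proof.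
move=> Ha; rewrite /mixed_after; case: eqP => [->//|/eqP nu]; case: eqP => [->//|/eqP nw].
by rewrite nth_mixed_vector // mixed_set // Hinc negb_or nu nw.
Qed.

Lemma slide_choice_opts k' : k' < 3 ->
  slide_choice k' \in guess_options (abs_positions C s) k u w k'.
Proof.
move=> Hk'; rewrite /slide_choice /guess_options; case: eqP => [_|/eqP ne]; first by rewrite inE.
rewrite nth_abs_positions //.
case: ifP => [/and3P[/eqP Eo Mu Mu']|_].
  rewrite Eo abs_pos_lift // (negbTE Mu) eqxx; have [_ Hu4 _] := mixed_inner Mu'.
  by rewrite (searcher_color_ok HI' Hk' _ Hu Hu4) ?Hoth // !inE.
case: ifP => [/and3P[/eqP Eo Mw Mw']|_]; last by case: ifP; rewrite inE.
rewrite Eo abs_pos_lift // (negbTE Mw) eqxx; have [_ Hw4 _] := mixed_inner Mw'.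
by rewrite (searcher_color_ok HI' Hk' _ Hw Hw4) ?Hoth // inE mem_cat inE eqxx orbT.
Qed.

Definition slide_guess : seq nat := [:: slide_choice 0; slide_choice 1; slide_choice 2].

Lemma slide_new_positions :
  map (fun k' => keep_if (mixed_after mv u w (mixed C' u) (mixed C' w))
         (guessed_pos (abs_positions C s) k u w slide_guess k')) (iota 0 3) = abs_positions C' s'.
Proof.
apply/eq_in_map => k'; rewrite mem_iota => /andP[_ Hk']; have {}Hk' : k' < 3 by lia.
rewrite /guessed_pos nth_abs_positions //; case: (eqVneq k' k) => [->|ne].
  by rewrite Hto abs_pos_lift // /keep_if mixed_afterE.
have -> : nth 0 slide_guess k' = slide_choice k' by case: (k') Hk' => [|[|[|]]].
rewrite Hoth // /slide_choice (negbTE ne).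
case: ifP => [/and3P[/eqP Eo _ Mu']|N1].
  by rewrite Eo abs_pos_lift // /keep_if mixed_afterE // Mu'.
case: ifP => [/and3P[/eqP Eo _ Mw']|N2].
  by rewrite Eo abs_pos_lift // /keep_if mixed_afterE // Mw'.
case Eo: (spos s (sg k')) N1 N2 => [x|] //= N1 N2.
case Ex: (unlift_vertex n x) => [a|] //; have [Ha Exa] := unlift_vertexP Ex.
rewrite /keep_if; case Ma: (mixed C a); first by rewrite mixed_afterE.
case Ma': (mixed C' a) => //.
case: (eqVneq a u) => [Eau|nu]; first by move: N1; rewrite Exa Eau eqxx -Eau Ma Ma'.
case: (eqVneq a w) => [Eaw|nw]; first by move: N2; rewrite Exa Eaw eqxx -Eaw Ma Ma'.
by move: Ma'; rewrite mixed_set ?Ma // Hinc negb_or nu nw.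
Qed.

Lemma sim_slide_core : spos s (sg k) = Some (lift_vertex n u) ->
  simulates s' (C', abs_positions C' s') ->
  (C', abs_positions C' s') \in abs_slides C (abs_positions C s) mv i0 k u w.
Proof.
move=> Hfrom HR'; rewrite -slide_new_positions; apply: abs_slides_mem.
- rewrite nth_abs_positions // Hfrom abs_pos_lift // nth_mixed_vector //.
  by case: (mixed C u); rewrite ?eqxx.
- by apply: guesses_mem; apply: slide_choice_opts.
rewrite slide_new_positions.
have Gu := mixed_guarded HI' HR' (a := u); have Gw := mixed_guarded HI' HR' (a := w).
rewrite /= in Gu Gw.
apply/andP; split; first by case: (mixed C' u) Gu => // ->.
by case: (mixed C' w) Gw => // ->.
Qed.

End CoreSlide.

Lemma others_fixed s m k : k < 3 -> sg k = actor m ->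
  forall k', k' < 3 -> k' != k -> spos (next G s m) (sg k') = spos s (sg k').
Proof.
move=> Hk Ek k' Hk' ne; apply: pos_after_other; rewrite -Ek.
by apply: contra_neq ne; apply: sg_inj.
Qed.

Lemma sim_slide s C j i : guarded_state G ct s -> simulates s (C, abs_positions C s) ->
  legal G ct s (Slide j i) -> no_recont G s (Slide j i) ->
  exists t', simulates (next G s (Slide j i)) t' /\
    (t' = (C, abs_positions C s) \/ t' \in abs_succ (C, abs_positions C s)).
Proof.
move=> HI HR Hl Hn; have HI' := guarded_next HI Hl Hn.
set s' := next G s (Slide j i).
have [k Hk Ek] := sg_surj j.
have Hoth := others_fixed (m := Slide j i) s Hk Ek.
have Hcl i' : i' < size G -> (sclean s' i' <-> sclean s i' \/ i' = i) by move/next_clean; apply.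
case: (Hl) => Hi [Hcol [u0 [Hu0 Hinc0]]].
case: (edge_classification Hi) => [[i0 Hi0 Ei]|[Hnot _]]; last first.
  apply: sim_reposition Hk HI' HR _ Hoth => i' Hi'; rewrite Hcl ?lift_edge_lt //.
  by split => [[//|E]|]; [move: (Hnot _ Hi'); rewrite -E eqxx | left].
have [HsC HC _] := HR; subst i.
have Hcol' : ecol (nth_edge G (lift_edge n i0)) = ct (sg k) by rewrite Ek.
have [d [Hk3 Hu Hw Hinc]] := slide_geometry Hk Hi0 Hcol' Hinc0.
set e := nth_edge core i0 in Hk3 Hu Hw Hinc.
set u := (if d then eu e else ev e) in Hu Hw Hinc.
set w := (if d then ev e else eu e) in Hw Hinc.
have [Hul Hwl] : u < 39 /\ w < 39 by have [] := core_edge_bounds Hi0; rewrite /u /w; case: (d).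
set C' := set_nth false C i0 true.
have HR' : simulates s' (C', abs_positions C' s').
  split => //; first by rewrite size_set_nth HsC; apply/maxn_idPr.
  move=> i' Hi'; rewrite Hcl ?lift_edge_lt // nth_set_nth /= -(HC i' Hi').
  case: (eqVneq i' i0) => [->|ne]; first by split => // _; right.
  split => [H|[H|E]] //; first by left.
  by move: ne; rewrite (lift_edge_inj Hi' Hi0 E) eqxx.
exists (C', abs_positions C' s'); split => //; right.
apply: (abs_succ_slide (d := d) Hi0); rewrite /abs_slide_along -/e Hk3 -/u -/w.
apply: sim_slide_core => //; first by rewrite /s' /= Ek eqxx Hu0 Hw.
by rewrite Ek Hu0 Hu.
Qed.

Lemma sim_step s t m : guarded_state G ct s -> simulates s t -> legal G ct s m -> no_recont G s m ->
  exists t', simulates (next G s m) t' /\ (t' = t \/ t' \in abs_succ t).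
Proof.
case: t => C P HI HR Hl Hn; have [_ _ /= EP] := HR; subst P.
have [k Hk Ek] := sg_surj (actor m); have Hoth := others_fixed s Hk Ek.
case: m Hl Hn {Ek} Hoth => [j v|j|j i] Hl Hn Hoth; last exact: sim_slide.
all: apply: sim_reposition Hk (guarded_next HI Hl Hn) HR _ Hoth.
all: by move=> i Hi; rewrite (next_clean _ Hn) ?lift_edge_lt.
Qed.

Lemma no_search_from ms : forall s t, guarded_state G ct s -> simulates s t -> reachable t ->
  ~ mono_search G ct s ms.
Proof.
elim: ms => [|m ms IH] s t HI HR Ht /=.
  move=> Hall; move: (reachable_not_final Ht); rewrite /abs_final; case: HR => HsC HC _.
  apply/negP/negPn/(all_nthP false) => i; rewrite HsC => Hi.
  by apply/HC => //; apply: Hall; exact: lift_edge_lt.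
case=> Hl Hn Hr; have [t' [HR' Ht']] := sim_step HI HR Hl Hn.
apply: (IH _ t' (guarded_next HI Hl Hn) HR' _ Hr).
by case: Ht' => [->|H] //; apply: reachable_succ H.
Qed.

Lemma simulates_init : simulates (init_state 3) abs_init.
Proof. by split => // i Hi; rewrite nth_nseq Hi. Qed.

End Simulation.

(* Path edge e_k of T_l has color k+1, so a cleaning strategy must use all
   three colors. *)
Lemma all_colors_used l ct ms : 3 <= l -> mono_search (Tl l) ct (init_state 3) ms ->
  forall k, k < 3 -> exists j, ct j = k.+1.
Proof.
move=> Hl Hms k Hk.
have Hi : 24 + k < size (Tl l) by rewrite size_Tl; lia.
have [j Hj] := cleaned_colors Hms (fun i _ (F : sclean (init_state 3) i) => match F with end) Hi.
exists j; rewrite Hj nth_Tl_path; last by lia.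
by rewrite /ecol /= modn_small // addn1.
Qed.

Definition color_searcher (ct : 'I_3 -> nat) (k : nat) : 'I_3 :=
  odflt ord0 [pick j | ct j == k.+1].

Lemma color_searcherP ct : (forall k, k < 3 -> exists j, ct j = k.+1) ->
  (forall k, k < 3 -> ct (color_searcher ct k) = k.+1) /\
  (forall j, exists2 k, k < 3 & color_searcher ct k = j).
Proof.
move=> Hcol.
have Hsg k : k < 3 -> ct (color_searcher ct k) = k.+1.
  move=> Hk; rewrite /color_searcher; case: pickP => [j /eqP //|H].
  by have [j Hj] := Hcol k Hk; move: (H j); rewrite Hj eqxx.
split=> // j.
have Hinj : injective (fun k : 'I_3 => color_searcher ct k).
  move=> a b E; apply: val_inj; have := Hsg a (ltn_ord a).
  by rewrite E Hsg ?ltn_ord // => -[].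
have [g _ fg] := injF_bij Hinj.
by exists (g j); [exact: ltn_ord | exact: fg].
Qed.

Theorem no_monotone_3_search l : 3 <= l -> forall ct : 'I_3 -> nat,
  ~ exists ms : seq (move 3), mono_search (Tl l) ct (init_state 3) ms.
Proof.
move=> Hl ct [ms Hms].
have [sgP sg_surj] := color_searcherP (all_colors_used Hl Hms).
have El : l = (l - 3) + 3 by lia.
rewrite El in Hms.
exact: (no_search_from sgP sg_surj (guarded_init _ _) (simulates_init _ _) reachable_init Hms).
Qed.

Theorem lemma3p5 : forall l : nat, 7 <= l ->
  forall ct : 'I_3 -> nat,
  ~ exists ms : seq (move 3), mono_search (Tl l) ct (init_state 3) ms.
Proof. by move=> l Hl; apply: no_monotone_3_search; apply: leq_trans Hl. Qed.
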